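(* Let $x\in[0,1)$ be rational, written in binary as $x=0.\alpha_1\alpha_2\alpha_3\ldots$ (choosing the expansion that does not end in infinitely many $1$'s). Define the walk $P_0=(0,0)$, $P_i=P_{i-1}+(1,0)$ if $\alpha_i=1$ and $P_i=P_{i-1}+(0,1)$ if $\alpha_i=0$. Let $X_i=1$ if $\gcd$ of the coordinates of $P_i$ equals $1$ and $X_i=0$ otherwise, and $\overline S_n(x)=\frac{X_1+\cdots+X_n}{n}$. Then $\lim_{n\to\infty}\overline S_n(x)$ exists and is a rational number. *)

From Stdlib Require Import Reals Arith ZArith.
Open Scope R_scope.

(* i-th binary digit alpha_i (i >= 1) of x in [0,1):
   alpha_i = floor(2^i x) mod 2. This is exactly the expansion that does
   not end in infinitely many 1's. Int_part is the floor function. *)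
Definition alpha (x : R) (i : nat) : bool := Z.odd (Int_part (2 ^ i * x)).

Fixpoint walk (x : R) (n : nat) : nat * nat :=
  match n with
  | O => (0%nat, 0%nat)
  | S m => let (a, b) := walk x m in
           if alpha x (S m) then (S a, b) else (a, S b)
  end.

Definition Xi (x : R) (i : nat) : nat :=
  if Nat.eqb (Nat.gcd (fst (walk x i)) (snd (walk x i))) 1 then 1%nat else 0%nat.

Fixpoint sumX (x : R) (n : nat) : nat :=
  match n with
  | O => 0%nat
  | S m => (sumX x m + Xi x (S m))%nat
  end.

Definition Sbar (x : R) (n : nat) : R := INR (sumX x n) / INR n.

(* The binary digits of a rational number are eventually periodic, say with
   period T from N on.  From then on the walk advances by a fixed vector (a, b),
   a + b = T, every T steps, so along each residue class j mod T it runs on the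
   line P_(N+j) + m (a, b).  On a line u + m a, v + m b every common divisor of
   the coordinates divides the invariant |b u - a v|, so coprimality is periodic
   in m with that period; if the invariant vanishes the points are multiples of
   (a, b) and are not primitive for m >= 2.  Hence X_i is eventually periodic,
   and the Cesaro means of an eventually periodic integer sequence converge to
   its average over one period, which is rational. *)

From Stdlib Require Import Reals Arith ZArith List Lia Lra Classical.
Open Scope nat_scope.

Definition eventually_periodic {A : Type} (u : nat -> A) (K T : nat) : Prop :=
  forall n, K <= n -> u (n + T) = u n.

Lemma eventually_periodic_mul {A : Type} (u : nat -> A) K T k :
  eventually_periodic u K T -> eventually_periodic u K (k * T).
Proof.
  intros Hu n Hn; induction k as [|k IH]; simpl; [now rewrite Nat.add_0_r|].
  replace (n + (T + k * T)) with (n + k * T + T) by lia.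
  rewrite Hu by lia; exact IH.
Qed.

Lemma common_eventual_period {A : Type} (g : nat -> nat -> A) K n :
  (forall j, j < n -> exists T, 0 < T /\ eventually_periodic (g j) K T) ->
  exists T, 0 < T /\ forall j, j < n -> eventually_periodic (g j) K T.
Proof.
  induction n as [|n IH]; intros Hg.
  - exists 1; split; [lia|]; intros j Hj; lia.
  - destruct IH as [T1 [HT1 Hper1]]; [intros j Hj; apply Hg; lia|].
    destruct (Hg n) as [T2 [HT2 Hper2]]; [lia|].
    exists (T1 * T2); split; [nia|]; intros j Hj.
    destruct (Nat.eq_dec j n) as [->|Hne].
    + now apply eventually_periodic_mul.
    + rewrite Nat.mul_comm; apply eventually_periodic_mul, Hper1; lia.
Qed.

Lemma pigeonhole (f : nat -> nat) q :
  (forall i, i <= q -> f i < q) -> exists i j, i < j <= q /\ f i = f j.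
Proof.
  intros Hf; apply NNPP; intros Hno.
  assert (Hnodup : NoDup (map f (seq 0 (S q)))).
  { apply NoDup_map_NoDup_ForallPairs; [|apply seq_NoDup].
    intros i j Hi Hj Hij; apply in_seq in Hi, Hj.
    destruct (lt_eq_lt_dec i j) as [[Hlt|]|Hlt]; [|easy|];
      exfalso; apply Hno; [exists i, j|exists j, i]; split; auto; lia. }
  apply NoDup_incl_length with (l' := seq 0 q) in Hnodup.
  - rewrite length_map, !length_seq in Hnodup; lia.
  - intros y Hy; apply in_map_iff in Hy as [i [<- Hi]]; apply in_seq in Hi.
    apply in_seq; specialize (Hf i); lia.
Qed.

Lemma recurrence_eventually_periodic (g : Z -> Z) (r : nat -> Z) (q : Z) :
  (forall i, r (S i) = g (r i)) -> (forall i, (0 <= r i < q)%Z) ->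
  exists N T, 0 < T /\ eventually_periodic r N T.
Proof.
  intros Hrec Hbound.
  destruct (pigeonhole (fun i => Z.to_nat (r i)) (Z.to_nat q)) as [i [j [Hij Heq]]].
  { intros i _; specialize (Hbound i); lia. }
  assert (Hshift : forall k, r (i + k) = r (j + k)).
  { induction k as [|k IH].
    - rewrite !Nat.add_0_r; pose proof (Hbound i); pose proof (Hbound j); lia.
    - rewrite <- !plus_n_Sm, !Hrec, IH; reflexivity. }
  exists i, (j - i); split; [lia|]; intros n Hn.
  replace (n + (j - i)) with (j + (n - i)) by lia.
  rewrite <- Hshift; f_equal; lia.
Qed.

Fixpoint partial_sum (u : nat -> nat) (n : nat) : nat :=
  match n with
  | O => 0
  | S m => partial_sum u m + u (S m)
  end.

Lemma partial_sum_le_add u n k : partial_sum u n <= partial_sum u (n + k).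
Proof. induction k as [|k IH]; [rewrite Nat.add_0_r|rewrite <- plus_n_Sm; simpl]; lia. Qed.

Section PeriodicSums.

Variables (u : nat -> nat) (K T : nat).
Hypothesis Hper : eventually_periodic u K T.

Let c := partial_sum u (K + T) - partial_sum u K.

Lemma partial_sum_add_period n : K <= n -> partial_sum u (n + T) = partial_sum u n + c.
Proof.
  intros Hn; replace n with (K + (n - K)) by lia; generalize (n - K) as d.
  induction d as [|d IH].
  - rewrite Nat.add_0_r; pose proof (partial_sum_le_add u K T); unfold c; lia.
  - replace (K + S d + T) with (S (K + d + T)) by lia.
    replace (K + S d) with (S (K + d)) by lia; simpl.
    replace (S (K + d + T)) with (S (K + d) + T) by lia.
    rewrite Hper, IH by lia; lia.
Qed.

Lemma partial_sum_add_periods n m : K <= n -> partial_sum u (n + m * T) = partial_sum u n + m * c.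
Proof.
  intros Hn; induction m as [|m IH]; [simpl; rewrite Nat.add_0_r; lia|].
  replace (n + S m * T) with (n + m * T + T) by lia.
  rewrite partial_sum_add_period, IH by lia; simpl; lia.
Qed.

End PeriodicSums.

Definition absdiff (m n : nat) : nat := (m - n) + (n - m).

Lemma absdiff_add_r m n k : absdiff (m + k) (n + k) = absdiff m n.
Proof. unfold absdiff; lia. Qed.

Lemma divide_absdiff g m n : Nat.divide g m -> Nat.divide g n -> Nat.divide g (absdiff m n).
Proof. intros Hm Hn; apply Nat.divide_add_r; apply Nat.divide_sub_r; assumption. Qed.

Lemma gcd_add_mul_shift (X Y a b M : nat) :
  Nat.divide (absdiff (b * X) (a * Y)) M ->
  Nat.gcd (X + M * a) (Y + M * b) = Nat.gcd X Y.
Proof.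
  intros HM.
  assert (Hdet : forall g U V, Nat.divide g U -> Nat.divide g V ->
                 absdiff (b * U) (a * V) = absdiff (b * X) (a * Y) -> Nat.divide g M).
  { intros g U V HU HV Heq; apply (Nat.divide_trans _ (absdiff (b * X) (a * Y))); [|exact HM].
    rewrite <- Heq; apply divide_absdiff; apply Nat.divide_mul_r; assumption. }
  apply Nat.gcd_unique_alt; intros g; split.
  - intros Hg.
    assert (HX : Nat.divide g X) by (eapply Nat.divide_trans; [exact Hg|apply Nat.gcd_divide_l]).
    assert (HY : Nat.divide g Y) by (eapply Nat.divide_trans; [exact Hg|apply Nat.gcd_divide_r]).
    assert (HgM : Nat.divide g M) by (apply (Hdet g X Y HX HY); reflexivity).
    split; apply Nat.divide_add_r; auto; apply Nat.divide_mul_l; exact HgM.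
  - intros [HX HY].
    assert (HgM : Nat.divide g M).
    { apply (Hdet g _ _ HX HY).
      replace (b * (X + M * a)) with (b * X + M * a * b) by ring.
      replace (a * (Y + M * b)) with (a * Y + M * a * b) by ring.
      apply absdiff_add_r. }
    apply Nat.gcd_greatest;
      [apply (Nat.divide_add_cancel_r _ (M * a))|apply (Nat.divide_add_cancel_r _ (M * b))];
      try (apply Nat.divide_mul_l; exact HgM); rewrite Nat.add_comm; assumption.
Qed.

Lemma coprime_proportional_le (X Y a b : nat) :
  b * X = a * Y -> 0 < a + b -> Nat.gcd X Y = 1 -> X + Y <= a + b.
Proof.
  intros Hprop Hab Hcop.
  assert (HXa : Nat.divide X a).
  { apply (Nat.gauss X Y a); [exists b; lia|exact Hcop]. }
  assert (HYb : Nat.divide Y b).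
  { apply (Nat.gauss Y X b); [exists a; lia|now rewrite Nat.gcd_comm]. }
  destruct (Nat.eq_dec a 0) as [Ha|Ha]; destruct (Nat.eq_dec b 0) as [Hb|Hb];
    try lia.
  - apply Nat.divide_pos_le in HYb; nia.
  - apply Nat.divide_pos_le in HXa; nia.
  - apply Nat.divide_pos_le in HXa; apply Nat.divide_pos_le in HYb; lia.
Qed.

Lemma coprime_on_line_eventually_periodic (u v a b : nat) : 0 < a + b ->
  exists M, 0 < M /\
    eventually_periodic (fun m => Nat.eqb (Nat.gcd (u + m * a) (v + m * b)) 1) 2 M.
Proof.
  intros Hab.
  destruct (Nat.eq_dec (absdiff (b * u) (a * v)) 0) as [Hdeg|Hdet].
  - assert (Hnot_coprime : forall m, 2 <= m -> Nat.gcd (u + m * a) (v + m * b) <> 1).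
    { intros m Hm Hcop.
      apply (coprime_proportional_le _ _ a b) in Hcop; [nia|unfold absdiff in Hdeg; nia|exact Hab]. }
    exists 1; split; [lia|]; intros m Hm.
    rewrite (proj2 (Nat.eqb_neq _ _) (Hnot_coprime m Hm)).
    rewrite (proj2 (Nat.eqb_neq _ _) (Hnot_coprime (m + 1) ltac:(lia))); reflexivity.
  - exists (absdiff (b * u) (a * v)); split; [lia|]; intros m Hm; cbv beta.
    rewrite !Nat.mul_add_distr_r, !Nat.add_assoc, gcd_add_mul_shift; [reflexivity|].
    replace (b * (u + m * a)) with (b * u + m * a * b) by ring.
    replace (a * (v + m * b)) with (a * v + m * a * b) by ring.
    rewrite absdiff_add_r; apply Nat.divide_refl.
Qed.

Lemma walk_psum x n :
  walk x n = (partial_sum (fun i => Nat.b2n (alpha x i)) n,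
              partial_sum (fun i => Nat.b2n (negb (alpha x i))) n).
Proof.
  induction n as [|n IH]; [reflexivity|]; simpl; rewrite IH.
  destruct (alpha x (S n)); simpl; f_equal; lia.
Qed.

Lemma partial_sum_b2n_negb (f : nat -> bool) n :
  partial_sum (fun i => Nat.b2n (f i)) n + partial_sum (fun i => Nat.b2n (negb (f i))) n = n.
Proof. induction n as [|n IH]; [reflexivity|]; simpl; destruct (f (S n)); simpl; lia. Qed.

Lemma sumX_partial_sum x n : sumX x n = partial_sum (Xi x) n.
Proof. induction n as [|n IH]; simpl; congruence. Qed.

Section WalkOnLines.

Variables (x : R) (N T : nat).
Hypotheses (HT : 0 < T) (Hper : eventually_periodic (alpha x) N T).

Let ones i := Nat.b2n (alpha x i).
Let zeros i := Nat.b2n (negb (alpha x i)).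
Let a := partial_sum ones (N + T) - partial_sum ones N.
Let b := partial_sum zeros (N + T) - partial_sum zeros N.

Lemma period_digit_counts_sum : a + b = T.
Proof.
  pose proof (partial_sum_b2n_negb (alpha x) N); pose proof (partial_sum_b2n_negb (alpha x) (N + T)).
  pose proof (partial_sum_le_add ones N T); pose proof (partial_sum_le_add zeros N T).
  unfold a, b, ones, zeros in *; lia.
Qed.

Lemma walk_on_line j m :
  walk x (N + j + m * T) = (partial_sum ones (N + j) + m * a, partial_sum zeros (N + j) + m * b).
Proof.
  assert (Hones : eventually_periodic ones N T)
    by (intros n Hn; unfold ones; now rewrite Hper).
  assert (Hzeros : eventually_periodic zeros N T)
    by (intros n Hn; unfold zeros; now rewrite Hper).
  rewrite walk_psum; fold ones zeros.
  rewrite (partial_sum_add_periods ones N T Hones), (partial_sum_add_periods zeros N T Hzeros) by lia.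
  reflexivity.
Qed.

Lemma Xi_eventually_periodic : exists P, 0 < P /\ eventually_periodic (Xi x) (N + 2 * T) P.
Proof.
  destruct (common_eventual_period
              (fun j m => Nat.eqb (Nat.gcd (partial_sum ones (N + j) + m * a)
                                           (partial_sum zeros (N + j) + m * b)) 1) 2 T)
    as [M [HM Hline]].
  { intros j _; apply coprime_on_line_eventually_periodic; pose proof period_digit_counts_sum; lia. }
  exists (M * T); split; [nia|]; intros i Hi.
  set (j := (i - N) mod T); set (m := (i - N) / T).
  assert (Hj : j < T) by (apply Nat.mod_upper_bound; lia).
  assert (Hi' : i = N + j + m * T) by (pose proof (Nat.div_mod_eq (i - N) T); unfold j, m; lia).
  assert (Hm : 2 <= m) by nia.
  replace (i + M * T) with (N + j + (m + M) * T) by (rewrite Hi'; ring).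
  pose proof (Hline j Hj m Hm) as Hjm; cbv beta in Hjm.
  rewrite Hi'; unfold Xi; rewrite !walk_on_line; simpl; now rewrite Hjm.
Qed.

End WalkOnLines.

Lemma Int_part_IZR_div (p q : Z) : (0 < q)%Z -> Int_part (IZR p / IZR q) = (p / q)%Z.
Proof.
  intros Hq; symmetry; apply Int_part_spec.
  assert (Hqr : (0 < IZR q)%R) by now apply IZR_lt.
  assert (Hy : (IZR p / IZR q * IZR q = IZR p)%R) by (field; lra).
  assert (Hdiv := Z.div_mod p q ltac:(lia)).
  assert (Hmod := Z.mod_pos_bound p q Hq).
  assert (Hlo : (IZR q * IZR (p / q) <= IZR p)%R)
    by (rewrite <- mult_IZR; apply IZR_le; lia).
  assert (Hhi : (IZR p < IZR q * IZR (p / q) + IZR q)%R)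
    by (rewrite <- mult_IZR, <- plus_IZR; apply IZR_lt; lia).
  set (y := (IZR p / IZR q)%R) in *; nra.
Qed.

Lemma Zodd_double_div_mod (n q : Z) : (0 < q)%Z ->
  Z.odd (2 * n / q) = Z.odd (2 * (n mod q) / q).
Proof.
  intros Hq.
  rewrite (Z.div_mod n q) at 1 by lia.
  replace (2 * (q * (n / q) + n mod q))%Z with (2 * (n / q) * q + 2 * (n mod q))%Z by ring.
  rewrite Z.div_add_l by lia.
  rewrite Z.odd_add, Z.odd_mul; reflexivity.
Qed.

Section RationalDigits.

Variables (x : R) (p : Z) (q : nat).
Hypotheses (Hq : 0 < q) (Hx : x = (IZR p / INR q)%R).

Lemma alpha_rational i : alpha x i = Z.odd (2 ^ Z.of_nat i * p / Z.of_nat q).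
Proof.
  unfold alpha; rewrite <- Int_part_IZR_div by lia; do 2 f_equal.
  rewrite Hx, INR_IZR_INZ, mult_IZR, <- pow_IZR; simpl (IZR 2); field.
  apply not_0_IZR; lia.
Qed.

Let remainder i := (2 ^ Z.of_nat i * p mod Z.of_nat q)%Z.

Lemma alpha_rational_S i : alpha x (S i) = Z.odd (2 * remainder i / Z.of_nat q).
Proof.
  rewrite alpha_rational, Nat2Z.inj_succ, Z.pow_succ_r by lia.
  rewrite <- Z.mul_assoc; apply Zodd_double_div_mod; lia.
Qed.

Lemma alpha_rational_eventually_periodic :
  exists N T, 0 < T /\ eventually_periodic (alpha x) N T.
Proof.
  destruct (recurrence_eventually_periodic (fun r => 2 * r mod Z.of_nat q)%Z remainder
              (Z.of_nat q)) as [N [T [HT Hper]]].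
  - intros i; unfold remainder.
    rewrite Nat2Z.inj_succ, Z.pow_succ_r, <- Z.mul_assoc, Z.mul_mod_idemp_r by lia.
    reflexivity.
  - intros i; apply Z.mod_pos_bound; lia.
  - exists (S N), T; split; [exact HT|]; intros [|n] Hn; [lia|].
    rewrite Nat.add_succ_l, !alpha_rational_S, Hper by lia; reflexivity.
Qed.
End RationalDigits.

Open Scope R_scope.

Lemma Un_cv_of_mul_dist_le (v : nat -> R) (l C : R) (K : nat) :
  (forall n, (K <= n)%nat -> INR n * Rabs (v n - l) <= C) -> Un_cv v l.
Proof.
  intros Hv eps Heps.
  destruct (INR_unbounded (C / eps)) as [N0 HN0].
  exists (Nat.max (S K) N0); intros n Hn; unfold R_dist.
  assert (Hn0 : INR N0 <= INR n) by (apply le_INR; lia).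
  assert (Hpos : 0 < INR n) by (apply lt_0_INR; lia).
  assert (HC : C / eps * eps = C) by (field; lra).
  specialize (Hv n ltac:(lia)).
  set (t := C / eps) in *; nra.
Qed.

Lemma partial_sum_mean_cv (u : nat -> nat) (K T : nat) :
  (0 < T)%nat -> eventually_periodic u K T ->
  Un_cv (fun n => INR (partial_sum u n) / INR n)
        (INR (partial_sum u (K + T) - partial_sum u K) / INR T).
Proof.
  intros HT Hper.
  set (c := (partial_sum u (K + T) - partial_sum u K)%nat).
  set (C := (T * partial_sum u (K + T) + (K + T) * c)%nat).
  assert (Hbound : forall n, (K <= n)%nat ->
            Rabs (INR (T * partial_sum u n) - INR (n * c)) <= INR C).
  { intros n Hn.
    set (r := ((n - K) mod T)%nat); set (m := ((n - K) / T)%nat).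
    assert (Hr : (r < T)%nat) by (apply Nat.mod_upper_bound; lia).
    assert (Hn' : n = (K + r + m * T)%nat)
      by (pose proof (Nat.div_mod_eq (n - K) T); unfold r, m; lia).
    assert (Hsum : partial_sum u n = (partial_sum u (K + r) + m * c)%nat)
      by (rewrite Hn'; apply partial_sum_add_periods; [exact Hper|lia]).
    assert (Hmono : (partial_sum u (K + r) <= partial_sum u (K + T))%nat).
    { replace (K + T)%nat with (K + r + (T - r))%nat by lia; apply partial_sum_le_add. }
    assert (Hcancel : (T * partial_sum u n + (K + r) * c = n * c + T * partial_sum u (K + r))%nat)
      by (rewrite Hsum, Hn'; ring).
    apply (f_equal INR) in Hcancel; rewrite !plus_INR in Hcancel.
    assert (H1 : INR (T * partial_sum u (K + r)) <= INR (T * partial_sum u (K + T)))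
      by (apply le_INR, Nat.mul_le_mono_l, Hmono).
    assert (H2 : INR ((K + r) * c) <= INR ((K + T) * c))
      by (apply le_INR, Nat.mul_le_mono_r; lia).
    unfold C; rewrite plus_INR.
    pose proof (pos_INR (T * partial_sum u (K + r))); pose proof (pos_INR ((K + r) * c)).
    apply Rabs_le; split; lra. }
  apply (Un_cv_of_mul_dist_le _ _ (INR C / INR T) (S K)).
  intros n Hn.
  assert (HTr : 0 < INR T) by (apply lt_0_INR; lia).
  assert (Hnr : 0 < INR n) by (apply lt_0_INR; lia).
  assert (Hdist : INR n * (INR (partial_sum u n) / INR n - INR c / INR T)
                 = (INR (T * partial_sum u n) - INR (n * c)) * / INR T)
    by (rewrite !mult_INR; field; lra).
  rewrite <- (Rabs_pos_eq (INR n)) at 1 by lra.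
  rewrite <- Rabs_mult, Hdist, Rabs_mult, Rabs_inv, (Rabs_pos_eq (INR T)) by lra.
  apply Rmult_le_compat_r; [apply Rlt_le, Rinv_0_lt_compat, HTr|apply Hbound; lia].
Qed.

Theorem theorem3 (x : R)
  (hx0 : 0 <= x) (hx1 : x < 1)
  (hrat : exists (p : Z) (q : nat), (q > 0)%nat /\ x = IZR p / INR q) :
  exists l : R, Un_cv (Sbar x) l /\
    exists (p : Z) (q : nat), (q > 0)%nat /\ l = IZR p / INR q.
Proof.
  destruct hrat as [p [q [Hq Hx]]].
  destruct (alpha_rational_eventually_periodic x p q Hq Hx) as [N [T [HT Hdigits]]].
  destruct (Xi_eventually_periodic x N T HT Hdigits) as [P [HP HXi]].
  set (K := (N + 2 * T)%nat).
  exists (INR (partial_sum (Xi x) (K + P) - partial_sum (Xi x) K) / INR P); split.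
  - apply Un_cv_ext with (fun n => INR (partial_sum (Xi x) n) / INR n).
    + intros n; unfold Sbar; now rewrite sumX_partial_sum.
    + now apply partial_sum_mean_cv.
  - exists (Z.of_nat (partial_sum (Xi x) (K + P) - partial_sum (Xi x) K)), P; split; [lia|].
    now rewrite <- INR_IZR_INZ.
Qed.
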